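(* For every integer $k\ge 2$, $$F_v(J_{2k+1},J_{2k+1};2k+1)\le 2F_v(k,k;k+1)+2F_v(J_{k+1},J_{k+1};k+1)+F_v(K_k,J_{k+1};k+1).$$
   Context: All graphs are finite and simple. $J_n$ denotes $K_n$ with one edge removed. An integer $a$ used in place of a graph denotes $K_a$. ''A graph $F$ contains $H$'' means $F$ has a (not necessarily induced) subgraph isomorphic to $H$. $G\rightarrow(H_1,\dots,H_r)^v$ means: for every partition $V(G)=X_1\cup\dots\cup X_r$ there is $i$ such that the subgraph induced by $X_i$ contains $H_i$. $\mathcal{F}_v(H_1,\dots,H_r;k)$ is the set of $K_k$-free graphs $G$ with $G\rightarrow(H_1,\dots,H_r)^v$, and $F_v(H_1,\dots,H_r;k)$ is the minimum number of vertices of a graph in this set. *)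

From mathcomp Require Import all_boot finset.
Set Implicit Arguments. Unset Strict Implicit. Unset Printing Implicit Defensive.

Definition simple_graph (T : finType) (e : rel T) : Prop :=
  (forall x y, e x y = e y x) /\ (forall x, ~~ e x x).

Definition Kg (a : nat) : rel 'I_a := fun i j => i != j.

Arguments Kg a : clear implicits.

(* J_n : K_n with the edge {0,1} removed *)
Definition Jg (n : nat) : rel 'I_n := fun i j =>
  (i != j) && ~~ (((val i == 0) && (val j == 1)) || ((val i == 1) && (val j == 0))).

Arguments Jg n : clear implicits.

Definition contains_in (T U : finType) (eG : rel T) (X : {set T}) (eH : rel U) : Prop :=
  exists f : U -> T,
    [/\ injective f, (forall u, f u \in X) & (forall u v, eH u v -> eG (f u) (f v))].

Definition clique_free (T : finType) (eG : rel T) (k : nat) : Prop :=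
  ~ contains_in eG [set: T] (Kg k).

(* G -> (H1,H2)^v : every partition V = X1 ∪ X2 has G[X1] ⊇ H1 or G[X2] ⊇ H2 *)
Definition varrows2 (T U1 U2 : finType) (eG : rel T) (e1 : rel U1) (e2 : rel U2) : Prop :=
  forall X : {set T}, contains_in eG X e1 \/ contains_in eG (~: X) e2.

Definition in_Fv (T U1 U2 : finType) (eG : rel T) (e1 : rel U1) (e2 : rel U2) (k : nat) : Prop :=
  [/\ simple_graph eG, clique_free eG k & varrows2 eG e1 e2].

(* F_v(H1,H2;k) <= n : some graph in F_v(H1,H2;k) has at most n vertices
   (graphs are taken on vertex sets 'I_m, w.l.o.g. up to isomorphism) *)
Definition Fv_le (U1 U2 : finType) (e1 : rel U1) (e2 : rel U2) (k n : nat) : Prop :=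
  exists m, m <= n /\ exists eG : rel 'I_m, in_Fv eG e1 e2 k.

Definition is_Fv (U1 U2 : finType) (e1 : rel U1) (e2 : rel U2) (k n : nat) : Prop :=
  Fv_le e1 e2 k n /\ forall m, Fv_le e1 e2 k m -> n <= m.

From mathcomp Require Import all_boot finset zify.
Set Implicit Arguments. Unset Strict Implicit. Unset Printing Implicit Defensive.

(* Blow up the 5-cycle: put a graph of F_v(k,k;k+1) at vertices 0 and 2, one of
   F_v(J_{k+1},J_{k+1};k+1) at 1 and 3 and one of F_v(K_k,J_{k+1};k+1) at 4, and join
   completely the parts at adjacent vertices.  As C_5 is triangle-free, a clique meets
   at most two parts, so the blow-up is K_{2k+1}-free.  In a 2-colouring, a J_{k+1} in
   one part and a K_k of the same colour in an adjacent part span a J_{2k+1}, and the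
   odd length of the cycle forces such an adjacent pair to exist. *)

Lemma contains_in_morph (T T' U : finType) (e : rel T) (e' : rel T') (eH : rel U)
    (h : T -> T') (S : {set T}) (S' : {set T'}) :
  injective h -> (forall x y, e x y -> e' (h x) (h y)) -> {in S, forall x, h x \in S'} ->
  contains_in e S eH -> contains_in e' S' eH.
Proof.
move=> h_inj h_hom hS [f [f_inj fS f_hom]]; exists (h \o f); split=> /=.
- exact: inj_comp.
- by move=> u; apply: hS.
- by move=> u v /f_hom /h_hom.
Qed.

Lemma contains_in_sub (T U : finType) (e : rel T) (eH : rel U) (S S' : {set T}) :
  S \subset S' -> contains_in e S eH -> contains_in e S' eH.
Proof. by move=> /subsetP sub; apply: (contains_in_morph (h := id)) => // x y. Qed.

Definition clique (T : finType) (e : rel T) (C : {set T}) :=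
  {in C &, forall x y, x != y -> e x y}.

Lemma clique_freeP (T : finType) (e : rel T) m :
  clique_free e m <-> forall C : {set T}, clique e C -> #|C| < m.
Proof.
split=> [e_free C eC | small [f [f_inj _ f_hom]]].
- rewrite ltnNge; apply/negP => mC; apply: e_free.
  apply: (contains_in_sub (S := C)); first exact: subsetT.
  exists (fun i => enum_val (widen_ord mC i)); split.
  + by move=> i j /enum_val_inj /(congr1 val) /= /val_inj.
  + by move=> i; apply: enum_valP.
  + move=> i j ij; apply: eC; rewrite ?enum_valP //.
    by rewrite (inj_eq enum_val_inj) -(inj_eq val_inj).
- suff: m < m by rewrite ltnn.
  rewrite -{1}(card_ord m) -cardsT -(card_imset _ f_inj).
  apply: small => _ _ /imsetP[i _ ->] /imsetP[j _ ->]; rewrite (inj_eq f_inj).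
  exact: f_hom.
Qed.

Lemma contains_Jg_join (T : finType) (e : rel T) (X1 X2 : {set T}) n m :
  [disjoint X1 & X2] -> {in X1 & X2, forall x y, e x y && e y x} ->
  contains_in e X1 (Jg n) -> contains_in e X2 (Kg m) ->
  contains_in e (X1 :|: X2) (Jg (n + m)).
Proof.
move=> dis cross [f [f_inj fX f_hom]] [g [g_inj gX g_hom]].
have fg u v : f u != g v.
  by apply: contraTneq (dis) => fg; apply/pred0Pn; exists (f u); rewrite /= fX fg gX.
exists (fun i => match split i with inl u => f u | inr v => g v end); split.
- move=> i j; case: split_ordP => u ->; case: split_ordP => v -> fgE.
  + by rewrite (f_inj _ _ fgE).
  + by move/eqP: (fg u v); rewrite fgE.
  + by move/eqP: (fg v u); rewrite fgE.
  + by rewrite (g_inj _ _ fgE).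
- by move=> i; case: split_ordP => u _; rewrite inE ?fX ?gX ?orbT.
- move=> i j; case: split_ordP => u ->; case: split_ordP => v ->.
  + by move=> uv; apply: f_hom; move: uv; rewrite /Jg eq_lshift.
  + by move=> _; have /andP[] := cross _ _ (fX u) (gX v).
  + by move=> _; have /andP[] := cross _ _ (fX v) (gX u).
  + by rewrite /Jg eq_rshift => /andP[uv _]; apply: g_hom.
Qed.

Section Blowup.
Variables (I : finType) (P : rel I) (T : I -> finType) (e : forall i, rel (T i)).

Definition blowup : rel {i : I & T i} := fun x y =>
  if tag x == tag y then e (tagged x) (tagged_as x y) else P (tag x) (tag y).

Lemma blowupE i (u v : T i) : blowup (Tagged T u) (Tagged T v) = e u v.
Proof. by rewrite /blowup /= eqxx tagged_asE. Qed.

Lemma blowup_cross x y : tag x != tag y -> blowup x y = P (tag x) (tag y).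
Proof. by rewrite /blowup => /negbTE ->. Qed.

Lemma Tagged_inj i : injective (@Tagged I i T).
Proof. exact: eq_from_Tagged. Qed.

Lemma blowup_simple :
  symmetric P -> (forall i, simple_graph (@e i)) -> simple_graph blowup.
Proof.
move=> P_sym e_simple; split=> [[i u] [j v]|[i u]]; last first.
  by rewrite blowupE; apply: (e_simple i).2.
move: v; have [<- v|ij v] := eqVneq i j; first by rewrite !blowupE; apply: (e_simple i).1.
by rewrite !blowup_cross 1?(eq_sym j) //= P_sym.
Qed.

Lemma blowup_clique_free r n :
  clique_free P r.+1 -> (forall i, clique_free (@e i) n.+1) ->
  clique_free blowup (r * n).+1.
Proof.
move=> /clique_freeP P_free e_free; apply/clique_freeP => C C_clique; rewrite ltnS.
pose S := [set tag y | y in C].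
have S_small : #|S| <= r.
  rewrite -ltnS; apply: P_free => _ _ /imsetP[x xC ->] /imsetP[y yC ->] xy.
  by rewrite -blowup_cross // C_clique //; apply: contraNneq xy => ->.
have fiber_small i : #|@Tagged I i T @^-1: C| <= n.
  rewrite -ltnS; apply: (clique_freeP _ _).1 (e_free i) _ _ => u v.
  rewrite !inE => uC vC uv.
  by rewrite -blowupE C_clique // (inj_eq (@Tagged_inj i)).
rewrite -sum1_card (partition_big tag (mem S)) => [|y yC]; last exact: imset_f.
rewrite (leq_trans _ (leq_mul S_small (leqnn n))) // -sum_nat_const.
apply: leq_sum => i _; rewrite sum1dep_card.
apply: leq_trans (leq_trans (leq_imset_card (@Tagged I i T) _) (fiber_small i)).
apply: subset_leq_card.
apply/subsetP => -[j u]; rewrite !inE => /andP[uC /eqP /= ji]; subst j.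
by rewrite imset_f // inE.
Qed.

Definition part_trace i (Y : {set {i : I & T i}}) : {set T i} := @Tagged I i T @^-1: Y.

Lemma varrows2_part i (U1 U2 : finType) (h1 : rel U1) (h2 : rel U2) Y :
  varrows2 (@e i) h1 h2 ->
  contains_in (@e i) (part_trace i Y) h1 \/ contains_in (@e i) (part_trace i (~: Y)) h2.
Proof. by move/(_ (part_trace i Y)); rewrite /part_trace preimsetC. Qed.

Lemma contains_in_part i (U : finType) (h : rel U) (S : {set T i}) :
  contains_in (@e i) S h -> contains_in blowup (@Tagged I i T @: S) h.
Proof.
apply: contains_in_morph; first exact: Tagged_inj.
- by move=> u v; rewrite blowupE.
- by move=> u uS; rewrite imset_f.
Qed.

Lemma blowup_contains_join i j Y n m :
  i != j -> P i j -> P j i ->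
  contains_in (@e j) (part_trace j Y) (Jg n) -> contains_in (@e i) (part_trace i Y) (Kg m) ->
  contains_in blowup Y (Jg (n + m)).
Proof.
move=> ij Pij Pji /contains_in_part hJ /contains_in_part hK.
apply: contains_in_sub (contains_Jg_join _ _ hJ hK).
- by apply/subsetP => x /setUP[] /imsetP[u + ->]; rewrite inE.
- apply/pred0P => x /=; apply/negbTE/andP => -[/imsetP[u _ ->]].
  by move=> /imsetP[v _ /(congr1 tag) /= ji]; move: ij; rewrite ji eqxx.
- move=> _ _ /imsetP[u _ ->] /imsetP[v _ ->] /=.
  by rewrite !blowup_cross //= ?Pij ?Pji // eq_sym.
Qed.

End Blowup.

Definition c5 : rel 'I_5 := fun i j => (i.+1 %% 5 == j) || (j.+1 %% 5 == i).

Lemma c5_simple : simple_graph c5.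
Proof. by split=> [|]; do ![case=> [[|[|[|[|[|//]]]]] ?]]. Qed.

Lemma c5_triangle_free : clique_free c5 3.
Proof.
move=> [f [_ _ f_hom]]; pose o1 := @Ordinal 3 1 isT.
have: [&& c5 (f ord0) (f o1), c5 (f o1) (f ord_max) & c5 (f ord0) (f ord_max)].
  by rewrite !f_hom.
by move: (f _) (f _) (f _); do ![case=> [[|[|[|[|[|//]]]]] ?]].
Qed.

Section C5Blowup.
Variables (T0 T1 T2 T3 T4 : finType).
Variables (e0 : rel T0) (e1 : rel T1) (e2 : rel T2) (e3 : rel T3) (e4 : rel T4).

Definition c5part_nat n : finType :=
  match n with 0 => T0 | 1 => T1 | 2 => T2 | 3 => T3 | _.+4 => T4 end.

Definition c5edges_nat n : rel (c5part_nat n) :=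
  match n with 0 => e0 | 1 => e1 | 2 => e2 | 3 => e3 | _.+4 => e4 end.

Definition c5part (i : 'I_5) := c5part_nat i.
Definition c5edges (i : 'I_5) : rel (c5part i) := @c5edges_nat i.
Arguments c5edges : clear implicits.

Definition c5blowup := blowup c5 c5edges.

Lemma c5edges_forall (Q : forall T : finType, rel T -> Prop) :
  Q _ e0 -> Q _ e1 -> Q _ e2 -> Q _ e3 -> Q _ e4 -> forall i, Q _ (c5edges i).
Proof. by move=> ? ? ? ? ?; case=> [[|[|[|[|[|//]]]]] ?]. Qed.

Lemma card_c5blowup :
  #|{: {i : 'I_5 & c5part i}}| = #|T0| + #|T1| + #|T2| + #|T3| + #|T4|.
Proof.
rewrite card_tagged sumnE big_map big_enum /= !big_ord_recl big_ord0 /=.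
by rewrite addn0 !addnA.
Qed.

Lemma c5blowup_arrows k :
  varrows2 e0 (Kg k) (Kg k) -> varrows2 e1 (Jg k.+1) (Jg k.+1) ->
  varrows2 e2 (Kg k) (Kg k) -> varrows2 e3 (Jg k.+1) (Jg k.+1) ->
  varrows2 e4 (Kg k) (Jg k.+1) ->
  varrows2 c5blowup (Jg (k.+1 + k)) (Jg (k.+1 + k)).
Proof.
move=> a0 a1 a2 a3 a4 X.
pose o0 := @Ordinal 5 0 isT; pose o1 := @Ordinal 5 1 isT; pose o2 := @Ordinal 5 2 isT.
pose o3 := @Ordinal 5 3 isT; pose o4 := @Ordinal 5 4 isT.
pose side (b : bool) := if b then X else ~: X.
pose part_has i b (U : finType) (h : rel U) :=
  contains_in (c5edges i) (part_trace i (side b)) h.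
suff [[] hb] : exists b, contains_in c5blowup (side b) (Jg (k.+1 + k)) by [left | right].
have sym_part i (U : finType) (H : rel U) :
    varrows2 (c5edges i) H H -> exists b, part_has i b _ H.
  by move=> /(varrows2_part X) [h|h]; [exists true | exists false].
have C_part b : part_has o4 b _ (Kg k) \/ part_has o4 (~~ b) _ (Jg k.+1).
  case: b; first exact: varrows2_part.
  by have := varrows2_part (e := c5edges) (i := o4) (~: X) a4; rewrite setCK.
have join i j b : c5 i j -> part_has j b _ (Jg k.+1) -> part_has i b _ (Kg k) ->
    exists b, contains_in c5blowup (side b) (Jg (k.+1 + k)).
  move=> ij hJ hK; exists b; apply: blowup_contains_join hJ hK => //.
  - by apply: contraTneq ij => ->; rewrite c5_simple.2.
  - by rewrite c5_simple.1.
have [b1 h1] := sym_part o1 _ _ a1; have [b3 h3] := sym_part o3 _ _ a3.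
have [b0 h0] := sym_part o0 _ _ a0; have [b2 h2] := sym_part o2 _ _ a2.
(* Unless two adjacent parts of 0,1,2,3 already agree, their colours alternate, and
   whichever alternative part 4 takes closes the odd cycle. *)
have [b01|b01] := eqVneq b0 b1; first by subst b0; exact: (join o0 o1 b1 isT h1 h0).
have [b21|b21] := eqVneq b2 b1; first by subst b2; exact: (join o2 o1 b1 isT h1 h2).
have [b23|b23] := eqVneq b2 b3; first by subst b2; exact: (join o2 o3 b3 isT h3 h2).
have b31 : b3 = b1 by move: b21 b23; case: (b1); case: (b2); case: (b3).
have b0_opp : b0 = ~~ b1 by move: b01; case: (b0); case: (b1).
subst b3 b0.
case: (C_part b1) => h4; first exact: (join o4 o3 b1 isT h3 h4).
exact: (join o0 o4 (~~ b1) isT h4 h0).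
Qed.

End C5Blowup.

Lemma in_Fv_ord (T U1 U2 : finType) (eG : rel T) (e1 : rel U1) (e2 : rel U2) k :
  in_Fv eG e1 e2 k -> exists eG' : rel 'I_#|T|, in_Fv eG' e1 e2 k.
Proof.
case=> [[G_sym G_irr] G_free G_arrow].
exists (fun i j => eG (enum_val i) (enum_val j)); split.
- by split=> [i j|i]; [apply: G_sym | apply: G_irr].
- move=> hK; apply: G_free; move: hK.
  by apply: contains_in_morph enum_val_inj _ _ => // i _; rewrite inE.
- move=> X; have [h|h] := G_arrow (enum_rank @^-1: X); [left|right]; move: h;
    rewrite -?preimsetC; apply: contains_in_morph enum_rank_inj _ _ => [x y|x];
    by rewrite ?inE ?enum_rankK.
Qed.

Theorem mainTheorem4 (k : nat) (hk : 2 <= k) (a b c : nat) :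
  is_Fv (Kg k) (Kg k) k.+1 a ->
  is_Fv (Jg k.+1) (Jg k.+1) k.+1 b ->
  is_Fv (Kg k) (Jg k.+1) k.+1 c ->
  Fv_le (Jg (2 * k).+1) (Jg (2 * k).+1) (2 * k).+1 (2 * a + 2 * b + c).
Proof.
(* The construction works for every k. *)
move=> [[ma [ma_le [eA [A_simple A_free A_arrow]]]] _].
move=> [[mb [mb_le [eB [B_simple B_free B_arrow]]]] _].
move=> [[mc [mc_le [eC [C_simple C_free C_arrow]]]] _].
pose G := c5blowup eA eB eA eB eC.
have G_Fv : in_Fv G (Jg (2 * k).+1) (Jg (2 * k).+1) (2 * k).+1.
  split.
  - apply: blowup_simple; first exact: c5_simple.1.
    exact: (c5edges_forall (Q := @simple_graph)).
  - apply: blowup_clique_free c5_triangle_free _.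
    exact: (c5edges_forall (Q := fun T e => clique_free e k.+1)).
  - by rewrite mul2n -addnn -addSn; apply: c5blowup_arrows.
have [eG' G'_Fv] := in_Fv_ord G_Fv.
eexists; split; last by exists eG'.
rewrite card_c5blowup !card_ord; lia.
Qed.
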